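(* Let $G,H$ be finite groups and $f:G\to H$ an identity preserving function. Suppose $A\le H$ is an abelian subgroup with $[G,G;f]\le A$, $K\le\mathrm{Stab}_G(f)$ is a subgroup with $\gcd([G:K],|A|)=1$, $m$ is an integer with $m\,[G:K]\equiv 1\pmod{|A|}$, and $a_1,\dots,a_n$ are representatives of the right cosets of $K$ in $G$ ($G=\bigsqcup_i Ka_i$). Then the function $$x\mapsto f(x)\Bigl(\prod_{i=1}^n[a_i,x;f]\Bigr)^m$$ does not depend on the choice of $A$, $K$, $m$ or the coset representatives (subject to the stated conditions); in particular it coincides with the function obtained by taking $K=\mathrm{Stab}_G(f)$ and $A=[G,G;f]$. This function is called the distributed average $\overline{\overline f}$ of $f$.
   Context: For $f:G\to H$ and $a\in G$, $f^a(x)=f(a)^{-1}f(ax)$; $f$ is identity preserving if $f(1)=1$. $\mathrm{Stab}_G(f)=\{a\in G: f^a=f\}$, which is a subgroup when $f$ is identity preserving. The $f$-distributor is $[x,y;f]=f(y)^{-1}f(x)^{-1}f(xy)$, and $[G,G;f]=\langle [x,y;f]: x,y\in G\rangle$. *)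

(* finite groups G = [set: gT], H = [set: hT]. *)
From HB Require Import structures.
From mathcomp Require Import all_boot all_order all_algebra all_fingroup.
Set Implicit Arguments. Unset Strict Implicit. Unset Printing Implicit Defensive.

Local Open Scope group_scope.

Definition fshift (gT hT : finGroupType) (f : gT -> hT) (a : gT) : gT -> hT :=
  fun x => (f a)^-1 * f (a * x).

Definition Stab (gT hT : finGroupType) (f : gT -> hT) : {set gT} :=
  [set a | [forall x, fshift f a x == f x]].

Definition distr (gT hT : finGroupType) (f : gT -> hT) (x y : gT) : hT :=
  (f y)^-1 * (f x)^-1 * f (x * y).

Definition distrGroup (gT hT : finGroupType) (f : gT -> hT) : {set hT} :=
  <<[set distr f x y | x : gT, y : gT]>>.

Definition expgz (hT : finGroupType) (g : hT) (m : int) : hT :=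
  match m with
  | Posz n => g ^+ n
  | Negz n => (g ^+ n.+1)^-1
  end.

Definition right_transversal_seq (gT : finGroupType) (K : {set gT}) (r : seq gT) : Prop :=
  uniq [seq K :* a | a <- r] /\ [set K :* a | a in r] = rcosets K [set: gT].

Definition inv_mod_index (m : int) (k n : nat) : Prop :=
  (m * k%:Z = 1 %[mod n%:Z])%Z.

Definition admissible (gT hT : finGroupType) (f : gT -> hT)
  (A : {group hT}) (K : {group gT}) (m : int) (r : seq gT) : Prop :=
  [/\ abelian A /\ distrGroup f \subset A, K \subset Stab f,
      coprime #|[set: gT] : K| #|A|,
      inv_mod_index m #|[set: gT] : K| #|A|
    & right_transversal_seq K r].

Definition distavg (gT hT : finGroupType) (f : gT -> hT) (m : int) (r : seq gT)
  (x : gT) : hT :=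
  f x * expgz (\prod_(a <- r) distr f a x) m.

From HB Require Import structures.
From mathcomp Require Import all_boot all_order all_algebra all_fingroup all_solvable.
Set Implicit Arguments. Unset Strict Implicit. Unset Printing Implicit Defensive.
Local Open Scope group_scope.
Import FiniteModule.

(* Left multiplication by an element of S := Stab_G(f) does not change the
   distributor: [s a, x; f] = [a, x; f]. Hence for a transversal of K <= S,
   the product of the [a_i, x; f] regroups, in the abelian group [G,G;f], as
   P(x)^[S:K] with P(x) the product over a transversal of S. So the average is
   f(x) P(x)^(m [S:K]), and m [S:K] is an inverse of [G:S] modulo |[G,G;f]|,
   a divisor of |A|; such an inverse is unique modulo the exponent of P(x). *)

Section RightTransversal.
Variables (gT : finGroupType) (K : {group gT}) (r : seq gT).
Hypothesis trK : right_transversal_seq K r.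

Lemma rcoset_transversal b : exists2 a, a \in r & K :* b = K :* a.
Proof.
have: K :* b \in rcosets K [set: gT] by apply/rcosetsP; exists b; rewrite ?inE.
by case: trK => _ <- /imsetP [a ra ->]; exists a.
Qed.

Variable S : {group gT}.
Hypothesis sKS : K \subset S.

Lemma mem_rcosets_transversal C :
  (C \in [seq S :* a | a <- r]) = (C \in rcosets S [set: gT]).
Proof.
apply/mapP/rcosetsP => [[a _ ->]|[b _ ->]]; first by exists a; rewrite ?inE.
have [a ra /rcoset_eqP] := rcoset_transversal b.
case/rcosetP=> k Kk ->; exists a => //.
by rewrite rcosetM rcoset_id // (subsetP sKS).
Qed.

Lemma card_rcosets_sub_rcoset b :
  #|[set D in rcosets K [set: gT] | S * D == S :* b]| = #|S : K|.
Proof.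
suff -> : [set D in rcosets K [set: gT] | S * D == S :* b] =
          (fun D => D :* b) @: rcosets K S.
  by rewrite card_imset //; apply: can_inj (rcosetK b).
apply/setP => D; rewrite inE; apply/andP/imsetP.
- case=> /rcosetsP [a _ ->]; rewrite mulgA mulGSid // => /eqP /rcoset_eqP.
  case/rcosetP => c Sc ->; exists (K :* c); first by apply/rcosetsP; exists c.
  by rewrite rcosetM.
- case=> _ /rcosetsP [c Sc ->] ->; split.
    by apply/rcosetsP; exists (c * b); rewrite ?inE ?rcosetM.
  rewrite -rcosetM mulgA mulGSid //; apply/eqP/rcoset_eqP/rcosetP.
  by exists c.
Qed.

Lemma count_rcosets_transversal C : C \in rcosets S [set: gT] ->
  count_mem C [seq S :* a | a <- r] = #|S : K|.
Proof.
case: trK => uniq_r im_r /rcosetsP [b _ ->].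
have SKa a : S :* a = S * (K :* a) by rewrite mulgA mulGSid.
have rK D : (D \in [seq K :* a | a <- r]) = (D \in rcosets K [set: gT]).
  by rewrite -im_r; apply/mapP/imsetP => [][a ra ->]; exists a.
rewrite -(card_rcosets_sub_rcoset b) count_map.
under eq_count => a do rewrite /= SKa.
rewrite -(count_map (fun a => K :* a) (fun D => S * D == S :* b)) -size_filter.
rewrite -(card_uniqP (filter_uniq _ uniq_r)); apply: eq_card => D.
by rewrite mem_filter !inE rK andbC.
Qed.

Lemma sum_transversal_rcosets (V : nmodType) (u : gT -> V) :
  (forall s a, s \in S -> u (s * a) = u a) ->
  (\sum_(a <- r) u a = \sum_(C in rcosets S [set: gT]) u (repr C) *+ #|S : K|)%R.
Proof.
move=> uS.
have uSa a : u a = u (repr (S :* a)).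
  by case/rcosetP: (mem_repr_rcoset S a) => s Ss ->; rewrite uS.
transitivity (\sum_(C <- [seq S :* a | a <- r]) u (repr C))%R.
  by rewrite big_map; apply: eq_bigr => a _.
rewrite -big_undup_iterop_count big_uniq ?undup_uniq //=.
apply: eq_big => [C | C]; first by rewrite mem_undup mem_rcosets_transversal.
by rewrite mem_undup mem_rcosets_transversal => /count_rcosets_transversal ->.
Qed.

End RightTransversal.

(* [fmod] views the abelian group D as a Z-module, where the sum can be regrouped. *)
Lemma prod_transversal_rcosets (gT hT : finGroupType) (K S : {group gT})
    (r : seq gT) (D : {group hT}) (u : gT -> hT) :
  right_transversal_seq K r -> K \subset S -> abelian D -> (forall a, u a \in D) ->
  (forall s a, s \in S -> u (s * a) = u a) ->
  \prod_(a <- r) u a = (\prod_(C in rcosets S [set: gT]) u (repr C)) ^+ #|S : K|.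
Proof.
move=> trK sKS abD Du uS.
have uK a : u a = fmval (fmod abD (u a)) by rewrite fmodK.
rewrite (eq_bigr _ (fun a _ => uK a)) -fmval_sum.
rewrite (sum_transversal_rcosets trK sKS) => [|s a Ss]; last by rewrite uS.
rewrite GRing.sumrMnl fmvalZ [val _]fmval_sum.
by congr (_ ^+ _); apply: eq_bigr => C _; rewrite fmodK.
Qed.

Section Stabilizer.
Variables (gT hT : finGroupType) (f : gT -> hT).

Lemma StabP a : reflect (forall x, f (a * x) = f a * f x) (a \in Stab f).
Proof.
rewrite inE; apply: (iffP forallP) => [fa x | fa x]; last by rewrite /fshift fa mulKg.
by rewrite -(eqP (fa x)) /fshift mulKVg.
Qed.

Lemma distr_mulStabl s a x : s \in Stab f -> distr f (s * a) x = distr f a x.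
Proof.
move/StabP=> fs; rewrite /distr -[s * a * x]mulgA !fs invMg !mulgA.
by rewrite mulgKV.
Qed.

Lemma mem_distrGroup a x : distr f a x \in distrGroup f.
Proof. by rewrite mem_gen // imset2_f ?inE. Qed.

Canonical distrGroup_group := Eval hnf in [group of distrGroup f].

Hypothesis f1 : f 1 = 1.

Lemma group_set_Stab : group_set (Stab f).
Proof.
apply/group_setP; split; first by apply/StabP => x; rewrite mul1g f1 mul1g.
move=> a b /StabP fa /StabP fb; apply/StabP => x.
by rewrite -[a * b * x]mulgA !fa fb mulgA.
Qed.

Definition Stab_group := Group group_set_Stab.

End Stabilizer.

Section IntegerPower.
Variables (hT : finGroupType) (w : hT) (n : nat).
Hypothesis wn : w ^+ n = 1.

Lemma expg_eq_modz (a b : nat) : (a = b %[mod n])%Z -> w ^+ a = w ^+ b.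
Proof.
by rewrite !modz_nat => -[ab]; rewrite -(expg_mod a wn) -(expg_mod b wn) ab.
Qed.

Lemma expgz_modn (m : int) : (0 < n)%N -> expgz w m = w ^+ `|(m %% n)%Z|%N.
Proof.
move=> n_gt0; have n_neq0 : Posz n != 0%R by rewrite eqz_nat -lt0n.
have emE : Posz `|(m %% n)%Z|%N = (m %% n)%Z by rewrite gez0_abs ?modz_ge0.
case: m emE => k emE /=; first by apply: expg_eq_modz; rewrite emE modz_mod.
set e := `|_|%N in emE *.
suff /(canRL (mulgK _)) -> : w ^+ e * w ^+ k.+1 = 1 by rewrite mul1g.
rewrite -expgD -(expg0 w); apply: expg_eq_modz.
by rewrite PoszD emE modzDml NegzE GRing.subrr.
Qed.
End IntegerPower.

Lemma expgz_eq_mod (hT : finGroupType) (w : hT) (n : nat) (m m' : int) :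
  w ^+ n = 1 -> (m = m' %[mod n])%Z -> expgz w m = expgz w m'.
Proof.
case: n => [_ | n wn mm']; first by rewrite !modz0 => ->.
by rewrite !(expgz_modn wn) // mm'.
Qed.

Lemma expgzX (hT : finGroupType) (w : hT) (k : nat) (m : int) :
  expgz (w ^+ k) m = expgz w (m * k).
Proof.
have wo := expg_order w.
have wko : (w ^+ k) ^+ #[w] = 1 by rewrite -expgM mulnC expgM wo expg1n.
rewrite (expgz_modn wko) ?(expgz_modn wo) ?order_gt0 // -expgM.
have o_neq0 : Posz #[w] != 0%R by rewrite eqz_nat -lt0n order_gt0.
apply: (expg_eq_modz wo).
by rewrite PoszM !gez0_abs ?modz_ge0 // modzMmr modz_mod GRing.mulrC.
Qed.

Lemma inv_mod_index_uniq (m m' : int) (k n : nat) :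
  inv_mod_index m k n -> inv_mod_index m' k n -> (m = m' %[mod n])%Z.
Proof.
move=> mk m'k.
have mmk : ((m * (m' * k)) %% n = m %% n)%Z by rewrite -modzMmr m'k modzMmr GRing.mulr1.
have m'mk : ((m' * (m * k)) %% n = m' %% n)%Z by rewrite -modzMmr mk modzMmr GRing.mulr1.
by rewrite -mmk -m'mk GRing.mulrCA.
Qed.

Lemma inv_mod_index_dvd (m : int) (k n d : nat) :
  (d %| n)%N -> inv_mod_index m k n -> inv_mod_index m k d.
Proof.
rewrite /inv_mod_index => dn /eqP; rewrite eqz_mod_dvd => mk.
by apply/eqP; rewrite eqz_mod_dvd (dvdz_trans _ mk) ?dvdzE.
Qed.

Lemma inv_mod_indexM (m : int) (k1 k2 n : nat) :
  inv_mod_index m (k1 * k2) n -> inv_mod_index (m * k2) k1 n.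
Proof. by rewrite /inv_mod_index -GRing.mulrA -PoszM mulnC. Qed.

Lemma right_transversal_seq_repr (gT : finGroupType) (K : {group gT}) :
  right_transversal_seq K [seq repr C | C <- enum (rcosets K [set: gT])].
Proof.
have reprK C : C \in rcosets K [set: gT] -> K :* repr C = C.
  by case/rcosetsP=> b _ ->; rewrite rcoset_repr.
split.
  rewrite -map_comp (eq_in_map _ id _).1 ?map_id ?enum_uniq // => C.
  by rewrite mem_enum => /reprK.
apply/setP => C; apply/imsetP/idP => [[_ /mapP [D KD ->] ->] | KC].
  by rewrite reprK // -mem_enum.
by exists (repr C); rewrite ?reprK //; apply: map_f; rewrite mem_enum.
Qed.

Section DistributedAverage.
Variables (gT hT : finGroupType) (f : gT -> hT).
Hypothesis f1 : f 1 = 1.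
Local Notation S := (Stab_group f1).

Lemma distavg_Stab_rcosets A K m r x : admissible f A K m r ->
  distavg f m r x = f x * expgz (\prod_(C in rcosets S [set: gT]) distr f (repr C) x)
                                (m * #|S : K|).
Proof.
case=> [[abA sDA]] sKS _ _ trK; rewrite /distavg -expgzX.
rewrite (prod_transversal_rcosets (S := S) trK sKS (abelianS sDA abA)) //.
  by move=> a; apply: mem_distrGroup.
by move=> s a; apply: distr_mulStabl.
Qed.

Lemma admissible_inv_mod A K m r : admissible f A K m r ->
  inv_mod_index (m * #|S : K|) #|[set: gT] : S| #|distrGroup f|.
Proof.
case=> [[_ sDA]] sKS _ mK _; apply: inv_mod_index_dvd (cardSg sDA) _.
by apply: inv_mod_indexM; rewrite (Lagrange_index (subsetT S) sKS).
Qed.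

Lemma distavg_indep A A' K K' m m' r r' :
  admissible f A K m r -> admissible f A' K' m' r' ->
  distavg f m r =1 distavg f m' r'.
Proof.
move=> adm adm' x; rewrite !(distavg_Stab_rcosets x adm, distavg_Stab_rcosets x adm').
congr (_ * _); apply: expgz_eq_mod (inv_mod_index_uniq (admissible_inv_mod adm)
                                                   (admissible_inv_mod adm')).
by apply: expg_cardG; apply: group_prod => C _; apply: mem_distrGroup.
Qed.

Lemma admissible_Stab A K m r : admissible f A K m r ->
  admissible f (distrGroup f) S (m * #|S : K|)
             [seq repr C | C <- enum (rcosets S [set: gT])].
Proof.
move=> adm; have [[abA sDA] sKS coKA _ _] := adm; split.
- by split; [apply: abelianS sDA abA | apply: subxx].
- exact: subxx.
- exact: coprime_dvdl (indexgS _ (sKS : K \subset S)) (coprime_dvdr (cardSg sDA) coKA).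
- exact: admissible_inv_mod adm.
- exact: right_transversal_seq_repr.
Qed.

End DistributedAverage.

Theorem mainTheorem11 (gT hT : finGroupType) (f : gT -> hT) (f1 : f 1%g = 1%g) :
  (forall (A A' : {group hT}) (K K' : {group gT}) (m m' : int) (r r' : seq gT),
      admissible f A K m r -> admissible f A' K' m' r' ->
      forall x, distavg f m r x = distavg f m' r' x)
  /\
  (forall (A : {group hT}) (K : {group gT}) (m : int) (r : seq gT),
      admissible f A K m r ->
      exists (S : {group gT}) (D : {group hT}) (m0 : int) (r0 : seq gT),
        [/\ (S : {set gT}) = Stab f, (D : {set hT}) = distrGroup f,
            admissible f D S m0 r0
          & forall x, distavg f m0 r0 x = distavg f m r x]).
Proof.
split=> [A A' K K' m m' r r' | A K m r adm]; first exact: distavg_indep.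
have admS := admissible_Stab f1 adm.
exists (Stab_group f1), (distrGroup_group f), (m * #|Stab_group f1 : K|)%R,
  [seq repr C | C <- enum (rcosets (Stab_group f1) [set: gT])].
by split=> //; apply: distavg_indep admS adm.
Qed.
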